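(* Let $(\mathfrak{g},\theta)$ be a nilpotent symplectic Lie algebra over $\mathbb{R}$ and let $\nabla$ be the affine structure on $\mathfrak{g}$ associated to $\theta$, i.e. $\nabla(X,Y)$ is the unique vector with $\theta(\nabla(X,Y),Z)=-\theta(Y,[X,Z])$ for all $Z\in\mathfrak{g}$. Let $\widetilde{\mathfrak{g}}=\mathfrak{g}\oplus\mathbb{R}$ with bracket $[(X,\alpha),(Y,\lambda)]=([X,Y],\theta(X,Y))$. Let $\varphi$ be a bilinear form on $\mathfrak{g}$ with $\varphi(X,Y)-\varphi(Y,X)=\theta(X,Y)$, and let $\widetilde{\nabla}:\widetilde{\mathfrak{g}}\times\widetilde{\mathfrak{g}}\to\widetilde{\mathfrak{g}}$ be a bilinear map such that for all $X,Y\in\mathfrak{g}$, $\lambda\in\mathbb{R}$: $\widetilde{\nabla}((X,0),(Y,0))=(\nabla(X,Y),\varphi(X,Y))$ and $\widetilde{\nabla}((X,0),(0,\lambda))=\widetilde{\nabla}((0,\lambda),(X,0))$. Define, for $U,V,W\in\widetilde{\mathfrak{g}}$, $$C(U,V,W)=\widetilde{\nabla}(U,\widetilde{\nabla}(V,W))-\widetilde{\nabla}(V,\widetilde{\nabla}(U,W))-\widetilde{\nabla}([U,V],W).$$ If $C((X,0),(0,1),(Y,0))=0$ for all $X,Y\in\mathfrak{g}$, then $C((X,0),(Y,0),(0,1))=0$ for all $X,Y\in\mathfrak{g}$.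
   Context: A symplectic Lie algebra is a Lie algebra with a nondegenerate skew-symmetric bilinear form $\theta$ satisfying $\theta([X,Y],Z)+\theta([Y,Z],X)+\theta([Z,X],Y)=0$. An affine structure on a Lie algebra $\mathfrak{h}$ is a bilinear map $\nabla$ with $\nabla(X,Y)-\nabla(Y,X)=[X,Y]$ and $\nabla(X,\nabla(Y,Z))-\nabla(Y,\nabla(X,Z))=\nabla([X,Y],Z)$ for all $X,Y,Z$; the map $\nabla$ defined from $\theta$ in the claim is such a structure. *)

From HB Require Import structures.
From mathcomp Require Import all_boot all_order all_algebra.
From mathcomp Require Import reals.
Set Implicit Arguments. Unset Strict Implicit. Unset Printing Implicit Defensive.
Import Order.TTheory GRing.Theory Num.Theory.
Local Open Scope ring_scope.

Section Defs.
Variable R : realType.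

Definition bilin (V W : lmodType R) (f : V -> V -> W) : Prop :=
  (forall a x y z, f (a *: x + y) z = a *: f x z + f y z) /\
  (forall a x y z, f x (a *: y + z) = a *: f x y + f x z).

Definition is_lie_bracket (V : lmodType R) (br : V -> V -> V) : Prop :=
  [/\ bilin br, (forall x, br x x = 0) &
      (forall x y z, br x (br y z) + br y (br z x) + br z (br x y) = 0)].

Fixpoint itbr (V : lmodType R) (br : V -> V -> V) (x : V) (s : seq V) : V :=
  if s is y :: s' then br y (itbr br x s') else x.

(* nilpotent: the lower central series vanishes, i.e. all (k+1)-fold
   iterated brackets vanish for some k *)
Definition lie_nilpotent (V : lmodType R) (br : V -> V -> V) : Prop :=
  exists k : nat, forall (s : seq V) (x : V), size s = k -> itbr br x s = 0.

Definition is_symplectic_form (V : lmodType R) (br : V -> V -> V)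
  (theta : V -> V -> R^o) : Prop :=
  [/\ bilin theta, (forall x y, theta x y = - theta y x),
      (forall x, (forall y, theta x y = 0) -> x = 0) &
      (forall x y z, theta (br x y) z + theta (br y z) x + theta (br z x) y = 0)].

Definition ext_br (V : lmodType R) (br : V -> V -> V) (theta : V -> V -> R^o)
  (u v : (V * R^o)%type) : (V * R^o)%type :=
  (br u.1 v.1, theta u.1 v.1).

Definition curvC (V : lmodType R) (br : V -> V -> V) (theta : V -> V -> R^o)
  (tn : (V * R^o)%type -> (V * R^o)%type -> (V * R^o)%type)
  (u v w : (V * R^o)%type) : (V * R^o)%type :=
  tn u (tn v w) - tn v (tn u w) - tn (ext_br br theta u v) w.

End Defs.

From HB Require Import structures.
From mathcomp Require Import all_boot all_order all_algebra.
From mathcomp Require Import reals.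
Set Implicit Arguments. Unset Strict Implicit. Unset Printing Implicit Defensive.
Import GRing.Theory Num.Theory.
Local Open Scope ring_scope.

(* Write e = (0, 1). Splitting every vector of g ⊕ R as (Z, 0) + m e, the
   hypothesis C((X,0), e, (Y,0)) = 0 says that left multiplication by (X,0)
   acts on the vectors (Y,0)·e as (X,0)·((Y,0)·e) = φ(X,Y) e·e + (∇(X,Y),0)·e.
   Hence C((X,0),(Y,0),e) = (φ(X,Y) - φ(Y,X) - θ(X,Y)) e·e
   + (∇(X,Y) - ∇(Y,X) - [X,Y], 0)·e, and both coefficients vanish: the first
   by the choice of φ, the second because ∇ is torsion free, which follows from
   the closedness of θ. *)

Section Bilinear.
Variables (R : realType) (U W : lmodType R) (f : U -> U -> W).
Hypothesis fB : bilin f.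

Lemma bilinDl x y z : f (x + y) z = f x z + f y z.
Proof. by have := fB.1 1 x y z; rewrite !scale1r. Qed.

Lemma bilinDr x y z : f x (y + z) = f x y + f x z.
Proof. by have := fB.2 1 x y z; rewrite !scale1r. Qed.

Lemma bilin0l z : f 0 z = 0.
Proof. by apply: (addrI (f 0 z)); rewrite -bilinDl !addr0. Qed.

Lemma bilin0r x : f x 0 = 0.
Proof. by apply: (addrI (f x 0)); rewrite -bilinDr !addr0. Qed.

Lemma bilinNl x z : f (- x) z = - f x z.
Proof. by apply/eqP; rewrite -addr_eq0 -bilinDl addNr bilin0l. Qed.

Lemma bilinBl x y z : f (x - y) z = f x z - f y z.
Proof. by rewrite bilinDl bilinNl. Qed.

End Bilinear.

Section SymplecticConnection.
Variables (R : realType) (V : lmodType R) (br : V -> V -> V).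
Variables (theta : V -> V -> R^o) (nabla : V -> V -> V).
Hypothesis brL : is_lie_bracket br.
Hypothesis thetaS : is_symplectic_form br theta.
Hypothesis nablaE : forall X Y Z, theta (nabla X Y) Z = - theta Y (br X Z).

Lemma lie_bracket_anticomm x y : br x y = - br y x.
Proof.
case: brL => brB brxx _; apply/eqP; rewrite -addr_eq0.
have := brxx (x + y); rewrite (bilinDl brB) !(bilinDr brB) !brxx add0r addr0.
by move=> ->.
Qed.

Lemma symplectic_connection_torsion_free x y :
  nabla x y - nabla y x = br x y.
Proof.
case: thetaS => thB thA thN thC; apply/eqP; rewrite -subr_eq0; apply/eqP.
apply: thN => z; rewrite !(bilinBl thB) !nablaE (lie_bracket_anticomm x z).
rewrite (thA y) (bilinNl thB) (thA x) !opprK -[RHS]oppr0 -(thC x y z) !opprD.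
by rewrite addrC addrCA addrC.
Qed.

End SymplecticConnection.

Section CentralExtension.
Variables (R : realType) (V : lmodType R) (br : V -> V -> V).
Variables (theta phi : V -> V -> R^o) (nabla : V -> V -> V).
Variable tn : (V * R^o)%type -> (V * R^o)%type -> (V * R^o)%type.
Hypotheses (brB : bilin br) (thetaB : bilin theta) (tnB : bilin tn).
Hypothesis nabla_torsion_free : forall X Y, nabla X Y - nabla Y X = br X Y.
Hypothesis phiE : forall X Y, phi X Y - phi Y X = theta X Y.
Hypothesis tnE : forall X Y : V, tn (X, 0) (Y, 0) = (nabla X Y, phi X Y).
Hypothesis tn_comm : forall (X : V) (l : R), tn (X, 0) (0, l) = tn (0, l) (X, 0).
Hypothesis curvC_X_e_Y :
  forall X Y : V, curvC br theta tn (X, 0) (0, 1) (Y, 0) = 0.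

Local Notation e := ((0, 1) : V * R^o).

Lemma pair_decomp (Z : V) (m : R) : ((Z, m) : V * R^o) = m *: e + (Z, 0).
Proof. by congr pair; rewrite /= ?scaler0 ?add0r // addr0 [_ *: _]mulr1. Qed.

Lemma tn_ext_unit_l (X Y : V) :
  tn (X, 0) (tn (Y, 0) e) = phi X Y *: tn e e + tn (nabla X Y, 0) e.
Proof.
have := curvC_X_e_Y X Y; rewrite /curvC /ext_br /= (bilin0r brB) (bilin0r thetaB).
rewrite (bilin0l tnB) subr0 -tn_comm tnE (pair_decomp (nabla X Y)) tnB.2.
by rewrite -tn_comm => /eqP; rewrite subr_eq0 => /eqP.
Qed.

Lemma curvC_ext_unit (X Y : V) : curvC br theta tn (X, 0) (Y, 0) e = 0.
Proof.
rewrite /curvC /ext_br /= !tn_ext_unit_l (pair_decomp (br X Y)) tnB.1.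
have -> : ((br X Y, 0) : V * R^o) =
          (nabla X Y, 0) - (nabla Y X, 0) :> V * R^o.
  by congr pair; rewrite /= ?subr0 ?nabla_torsion_free.
by rewrite (bilinBl tnB) -phiE scalerBl opprD addrACA subrr.
Qed.

End CentralExtension.

Theorem mainTheorem3 (R : realType) (V : vectType R)
  (br : V -> V -> V) (theta : V -> V -> R^o) (nabla : V -> V -> V)
  (phi : V -> V -> R^o)
  (tn : (V * R^o)%type -> (V * R^o)%type -> (V * R^o)%type) :
  is_lie_bracket br ->
  lie_nilpotent br ->
  is_symplectic_form br theta ->
  (forall X Y Z, theta (nabla X Y) Z = - theta Y (br X Z)) ->
  bilin phi ->
  (forall X Y, phi X Y - phi Y X = theta X Y) ->
  bilin tn ->
  (forall X Y : V, tn (X, 0) (Y, 0) = (nabla X Y, phi X Y)) ->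
  (forall (X : V) (l : R), tn (X, 0) (0, l) = tn (0, l) (X, 0)) ->
  (forall X Y : V, curvC br theta tn (X, 0) (0, 1) (Y, 0) = 0) ->
  forall X Y : V, curvC br theta tn (X, 0) (Y, 0) (0, 1) = 0.
Proof.
move=> brL _ thetaS nablaE _ phiE tnB tnE tn_comm curvC_X_e_Y X Y.
have [brB _ _] := brL; have [thetaB _ _ _] := thetaS.
have torsion_free := symplectic_connection_torsion_free brL thetaS nablaE.
exact: (curvC_ext_unit brB thetaB tnB torsion_free).
Qed.
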